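(* Let $\alpha:[a,b]\to S^2$ be smooth and $f:[a,b]\to\mathbb{R}_+$ be smooth and positive, and suppose the integral curve $\beta(t)=\int_a^t f(s)\alpha(s)\,ds$ is a round $\epsilon$-suspension. Then for every $k\in[\tfrac12,\tfrac32]$ there is a positive function $g:[a,b]\to\mathbb{R}_+$ such that (i) $g(t)=f(t)$ for $t$ near $a$ and near $b$, and (ii) the integral curve $\gamma(t)=\int_a^t g(s)\alpha(s)\,ds$ is a $(k\epsilon)$-suspension with $\gamma(b)-\gamma(a)=k(\beta(b)-\beta(a))$.
   Context: $S^2$ is the unit sphere in $\mathbb{R}^3$, $\mathbb{R}_+=\{x>0\}$. A smooth arc $\beta:[a,b]\to\mathbb{R}^3$ is an $\epsilon$-suspension if it is an embedding into an isosceles triangle $\Delta$ whose base is the segment from $\beta(a)$ to $\beta(b)$ and whose height is $\epsilon$. It is a round $\epsilon$-suspension if moreover its image is a subarc of a round circle and $\|\beta'(t)\|$ is constant. *)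

From Stdlib Require Import Reals.
From Coquelicot Require Import Coquelicot.
Open Scope R_scope.

Definition V3 : Type := (R * R * R)%type.
Definition vx (v : V3) : R := fst (fst v).
Definition vy (v : V3) : R := snd (fst v).
Definition vz (v : V3) : R := snd v.
Definition mkV (x y z : R) : V3 := (x, y, z).
Definition vadd (u v : V3) : V3 := mkV (vx u + vx v) (vy u + vy v) (vz u + vz v).
Definition vscale (c : R) (v : V3) : V3 := mkV (c * vx v) (c * vy v) (c * vz v).
Definition vsub (u v : V3) : V3 := vadd u (vscale (-1) v).
Definition vdot (u v : V3) : R := vx u * vx v + vy u * vy v + vz u * vz v.
Definition vnorm (v : V3) : R := sqrt (vdot v v).

Definition on_S2 (v : V3) : Prop := vnorm v = 1.

(** Smooth real function (C^infinity on all of R). A smooth function on a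
    closed interval [a,b] is represented by a smooth extension to R. *)
Definition smooth (f : R -> R) : Prop := forall (n : nat) (x : R), ex_derive_n f n x.
Definition smooth3 (c : R -> V3) : Prop :=
  smooth (fun t => vx (c t)) /\ smooth (fun t => vy (c t)) /\ smooth (fun t => vz (c t)).

Definition vderiv (c : R -> V3) (t : R) : V3 :=
  mkV (Derive (fun s => vx (c s)) t) (Derive (fun s => vy (c s)) t)
      (Derive (fun s => vz (c s)) t).

Definition integral_curve (f : R -> R) (alpha : R -> V3) (a t : R) : V3 :=
  mkV (RInt (fun s => f s * vx (alpha s)) a t)
      (RInt (fun s => f s * vy (alpha s)) a t)
      (RInt (fun s => f s * vz (alpha s)) a t).

Definition isosceles_apex (A B P : V3) (eps : R) : Prop :=
  let M := vscale (1/2) (vadd A B) in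
  vdot (vsub P M) (vsub B A) = 0 /\ vnorm (vsub P M) = eps.

Definition in_triangle (A B P x : V3) : Prop :=
  exists l1 l2 l3 : R, 0 <= l1 /\ 0 <= l2 /\ 0 <= l3 /\ l1 + l2 + l3 = 1 /\
    x = vadd (vscale l1 A) (vadd (vscale l2 B) (vscale l3 P)).

(** Smooth embedding of [a,b]: smooth, injective, immersion (compact domain). *)
Definition smooth_embedding (beta : R -> V3) (a b : R) : Prop :=
  smooth3 beta /\
  (forall s t, a <= s <= b -> a <= t <= b -> beta s = beta t -> s = t) /\
  (forall t, a <= t <= b -> vderiv beta t <> mkV 0 0 0).

Definition suspension (beta : R -> V3) (a b eps : R) : Prop :=
  0 < eps /\ beta a <> beta b /\
  smooth_embedding beta a b /\
  exists P : V3, isosceles_apex (beta a) (beta b) P eps /\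
    forall t, a <= t <= b -> in_triangle (beta a) (beta b) P (beta t).

Definition round_suspension (beta : R -> V3) (a b eps : R) : Prop :=
  suspension beta a b eps /\
  (exists (C n : V3) (r : R), 0 < r /\ vnorm n = 1 /\
     forall t, a <= t <= b ->
       vnorm (vsub (beta t) C) = r /\ vdot (vsub (beta t) C) n = 0) /\
  (exists c : R, forall t, a <= t <= b -> vnorm (vderiv beta t) = c).

From Stdlib Require Import Reals Lra Lia Factorial.
From Coquelicot Require Import Coquelicot.
Open Scope R_scope.

(** The tangent of a round suspension of speed [c] turns uniformly in a fixed plane:
    [alpha t = cos θ e1 - sin θ e2] with [θ = w (t - m)] ranging over [[-θ0, θ0]], where [m] is
    the midpoint of [[a, b]].  Containment in the triangle of height [eps] over the chord
    [2 ρ e1], [ρ = (c / w) sin θ0], forces [θ0 <= π / 2] and the slope bound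
    [ρ |sin θ| <= eps cos θ].  Conversely, for any positive speed [g] symmetric about [m], the
    curve [∫ g alpha] has increasing [e1]-coordinate and nonnegative [e2]-coordinate, ends at
    [L e1] with [L = ∫ g cos θ], and the slope bound with [(L / 2, h)] in place of [(ρ, eps)]
    puts it in the isosceles triangle of height [h] over its chord.  The speed
    [g = c (1 + μ B)], with [B] a smooth symmetric plateau vanishing near the ends and [μ]
    chosen so that [L = 2 k ρ], scales the chord and the admissible height by [k]. *)

Lemma Derive_n_S (f : R -> R) n x : Derive_n f (S n) x = Derive_n (Derive f) n x.
Proof.
  rewrite <- Nat.add_1_r, <- (Derive_n_comp f n 1 x).
  apply Derive_n_ext; intro t; reflexivity.
Qed.

Lemma ex_derive_n_SS (f : R -> R) n x :
  ex_derive_n f (S (S n)) x <-> ex_derive_n (Derive f) (S n) x.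
Proof.
  simpl; split; apply ex_derive_ext; intro t.
  - apply Derive_n_S.
  - symmetry; apply Derive_n_S.
Qed.

Lemma smooth_ex_derive f : smooth f -> forall x, ex_derive f x.
Proof. intros Hf x; exact (Hf 1%nat x). Qed.

Lemma smooth_Derive f : smooth f -> smooth (Derive f).
Proof.
  intros Hf [|n] x; [exact I |].
  apply (proj1 (ex_derive_n_SS f n x)), Hf.
Qed.

Lemma smooth_of_Derive f : (forall x, ex_derive f x) -> smooth (Derive f) -> smooth f.
Proof.
  intros Hd HD [|[|n]] x; [exact I | exact (Hd x) |].
  apply (proj2 (ex_derive_n_SS f n x)), HD.
Qed.

Lemma smooth_ext f g : (forall t, f t = g t) -> smooth f -> smooth g.
Proof. intros E Hf n x; apply (ex_derive_n_ext f); auto. Qed.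

Lemma smooth_antiderivative F f : (forall x, is_derive F x (f x)) -> smooth f -> smooth F.
Proof.
  intros HF Hf; apply smooth_of_Derive.
  - intro x; exists (f x); apply HF.
  - apply (smooth_ext f); auto.
    intro t; symmetry; apply is_derive_unique, HF.
Qed.

Lemma smooth_continuity f : smooth f -> continuity f.
Proof.
  intros Hf x; apply continuity_pt_filterlim.
  apply (ex_derive_continuous (K := R_AbsRing) (V := R_NormedModule)), smooth_ex_derive, Hf.
Qed.

Lemma smooth_const c : smooth (fun _ => c).
Proof. intros n x; apply ex_derive_n_const. Qed.

Lemma smooth_plus f g : smooth f -> smooth g -> smooth (fun x => f x + g x).
Proof. intros Hf Hg n x; apply ex_derive_n_plus; apply filter_forall; auto. Qed.

Lemma smooth_scal c f : smooth f -> smooth (fun x => c * f x).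
Proof. intros Hf n x; apply ex_derive_n_scal_l, Hf. Qed.

Lemma smooth_comp_affine f p q : smooth f -> smooth (fun x => f (p * x + q)).
Proof.
  intros Hf n x.
  apply (ex_derive_n_comp_scal (fun y => f (y + q))).
  apply filter_forall; intros y k _; apply ex_derive_n_comp_trans, Hf.
Qed.

Lemma smooth_mult f g : smooth f -> smooth g -> smooth (fun x => f x * g x).
Proof.
  intros Hf Hg n; revert f g Hf Hg.
  induction n as [[|[|n]] IH] using Wf_nat.lt_wf_ind; intros f g Hf Hg x; [exact I | |].
  - apply ex_derive_mult; apply smooth_ex_derive; auto.
  - apply (proj2 (ex_derive_n_SS _ n x)).
    apply (ex_derive_n_ext (fun t => Derive f t * g t + f t * Derive g t)).
    + intro t; symmetry; apply is_derive_unique.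
      apply (is_derive_mult f g); try (apply Derive_correct, smooth_ex_derive; auto).
      intros; apply Rmult_comm.
    + apply ex_derive_n_plus; apply filter_forall; intros y k Hk;
        apply IH; auto using smooth_Derive; lia.
Qed.

Lemma continuity_continuous h : continuity h -> forall x, continuous h x.
Proof. intros Hh x; apply continuity_pt_filterlim, Hh. Qed.

Lemma ex_RInt_continuity h a b : continuity h -> ex_RInt h a b.
Proof.
  intro Hh; apply (ex_RInt_continuous (V := R_CompleteNormedModule)).
  intros; apply continuity_continuous, Hh.
Qed.

Lemma is_derive_RInt_continuity h a x : continuity h -> is_derive (fun t => RInt h a t) x (h x).
Proof.
  intro Hh; apply (is_derive_RInt h (fun t => RInt h a t) a x).
  - apply filter_forall; intro t.
    apply (RInt_correct (V := R_CompleteNormedModule)), ex_RInt_continuity, Hh.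
  - apply continuity_continuous, Hh.
Qed.

Lemma smooth_RInt h a : smooth h -> smooth (fun t => RInt h a t).
Proof.
  intro Hh; apply (smooth_antiderivative _ h); auto.
  intro x; apply is_derive_RInt_continuity, smooth_continuity, Hh.
Qed.

Lemma RInt_split h a b c : continuity h -> RInt h a b + RInt h b c = RInt h a c.
Proof.
  intro Hh; apply (RInt_Chasles (V := R_CompleteNormedModule)); apply ex_RInt_continuity, Hh.
Qed.

Lemma RInt_scal_l h k a b : continuity h -> RInt (fun s => k * h s) a b = k * RInt h a b.
Proof.
  intro Hh; exact (RInt_scal (V := R_CompleteNormedModule) h a b k (ex_RInt_continuity h a b Hh)).
Qed.

Lemma RInt_lin_comb h1 h2 p q a b : continuity h1 -> continuity h2 ->
  RInt (fun s => p * h1 s + q * h2 s) a b = p * RInt h1 a b + q * RInt h2 a b.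
Proof.
  intros H1 H2; rewrite <- (RInt_scal_l h1 p a b H1), <- (RInt_scal_l h2 q a b H2).
  assert (Hex : forall h, continuity h -> ex_RInt h a b) by (intros; apply ex_RInt_continuity; auto).
  exact (RInt_plus (V := R_CompleteNormedModule) _ _ a b
    (Hex (fun s => p * h1 s) ltac:(reg)) (Hex (fun s => q * h2 s) ltac:(reg))).
Qed.

Lemma RInt_eq_0 h a b : (forall x, Rmin a b < x < Rmax a b -> h x = 0) -> RInt h a b = 0.
Proof.
  intro H0; rewrite (RInt_ext h (fun _ => 0)), RInt_const by exact H0.
  apply Rmult_0_r.
Qed.

Lemma RInt_gt_0 h a b : a < b -> continuity h ->
  (forall x, a < x < b -> 0 < h x) -> 0 < RInt h a b.
Proof.
  intros Hab Hh Hpos; rewrite <- (RInt_eq_0 (fun _ => 0) a b) by reflexivity.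
  apply RInt_lt; auto; intros.
  - apply continuity_continuous, Hh.
  - apply continuous_const.
Qed.

Lemma RInt_le_const h a b K : a <= b -> continuity h ->
  (forall x, a < x < b -> h x <= K) -> RInt h a b <= K * (b - a).
Proof.
  intros Hab Hh HK.
  replace (K * (b - a)) with (RInt (fun _ => K) a b) by (rewrite RInt_const; apply Rmult_comm).
  apply RInt_le; auto.
  - apply ex_RInt_continuity, Hh.
  - apply ex_RInt_const.
Qed.

Lemma RInt_reflect_odd h a b : a <= b -> continuity h ->
  (forall s, a < s < b -> h (a + b - s) = - h s) -> RInt h a b = 0.
Proof.
  intros Hab Hh Hodd.
  assert (Hex : forall u v, ex_RInt h u v) by (intros; apply ex_RInt_continuity, Hh).
  pose proof (RInt_comp_lin (V := R_CompleteNormedModule) h (-1) (a + b) a b (Hex _ _)) as Href.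
  replace (-1 * a + (a + b)) with b in Href by ring.
  replace (-1 * b + (a + b)) with a in Href by ring.
  rewrite <- (opp_RInt_swap (V := R_CompleteNormedModule) h a b (Hex a b)) in Href.
  rewrite (RInt_ext _ h) in Href.
  - change (opp (RInt h a b)) with (- RInt h a b) in Href; lra.
  - rewrite Rmin_left, Rmax_right by exact Hab; intros x Hx.
    replace (-1 * x + (a + b)) with (a + b - x) by ring.
    rewrite Hodd by exact Hx; unfold scal; simpl; unfold mult; simpl; ring.
Qed.

Lemma RInt_cos_centered w a b : w <> 0 ->
  RInt (fun s => cos (w * (s - (a + b) / 2))) a b = 2 * sin (w * (b - a) / 2) / w.
Proof.
  intro Hw; apply is_RInt_unique.
  replace (2 * sin (w * (b - a) / 2) / w)
    with (minus (sin (w * (b - (a + b) / 2)) / w) (sin (w * (a - (a + b) / 2)) / w)).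
  - apply (is_RInt_derive (fun s => sin (w * (s - (a + b) / 2)) / w)).
    + intros x _; auto_derive; [exact I |]; unfold Rminus; field; exact Hw.
    + intros x _; apply continuity_continuous; reg.
  - replace (w * (a - (a + b) / 2)) with (- (w * (b - a) / 2)) by field.
    replace (w * (b - (a + b) / 2)) with (w * (b - a) / 2) by field.
    rewrite sin_neg; unfold minus, plus, opp; simpl; field; exact Hw.
Qed.

(** * A smooth plateau *)

Definition flat_exp (i : nat) (x : R) : R :=
  if Rlt_dec 0 x then exp (- / x) * (/ x) ^ i else 0.

Lemma flat_exp_pos i x : 0 < x -> flat_exp i x = exp (- / x) * (/ x) ^ i.
Proof. intro Hx; unfold flat_exp; destruct (Rlt_dec 0 x); [reflexivity | lra]. Qed.

Lemma flat_exp_nonpos i x : x <= 0 -> flat_exp i x = 0.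
Proof. intro Hx; unfold flat_exp; destruct (Rlt_dec 0 x); [lra | reflexivity]. Qed.

Lemma flat_exp_ge_0 i x : 0 <= flat_exp i x.
Proof.
  destruct (Rlt_le_dec 0 x) as [Hx | Hx]; [| rewrite flat_exp_nonpos; lra].
  rewrite flat_exp_pos by exact Hx.
  apply Rmult_le_pos; [apply Rlt_le, exp_pos | apply pow_le, Rlt_le, Rinv_0_lt_compat, Hx].
Qed.

Lemma flat_exp_gt_0 i x : 0 < x -> 0 < flat_exp i x.
Proof.
  intro Hx; rewrite flat_exp_pos by exact Hx.
  apply Rmult_lt_0_compat; [apply exp_pos | apply pow_lt, Rinv_0_lt_compat, Hx].
Qed.

Lemma pow_le_fact_exp n y : 0 <= y -> y ^ n <= INR (fact n) * exp y.
Proof.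
  intro Hy.
  assert (Hterms : forall k, 0 <= y ^ k / INR (fact k))
    by (intro k; apply Rdiv_le_0_compat; [apply pow_le, Hy | apply INR_fact_lt_0]).
  assert (Hsum : forall m, y ^ m / INR (fact m) <= sum_f_R0 (fun k => y ^ k / INR (fact k)) m).
  { intros [|m]; cbn [sum_f_R0]; [lra |].
    enough (0 <= sum_f_R0 (fun k => y ^ k / INR (fact k)) m) by lra.
    induction m as [|m IH]; cbn [sum_f_R0]; [apply Hterms |].
    specialize (Hterms (S m)); lra. }
  pose proof (Rle_trans _ _ _ (Hsum n) (exp_ge_taylor y n Hy)) as Hn.
  pose proof (INR_fact_lt_0 n) as Hfact.
  apply (Rmult_le_compat_l (INR (fact n))) in Hn; [| lra].
  unfold Rdiv in Hn; rewrite Rmult_comm, Rmult_assoc, Rinv_l, Rmult_1_r in Hn by lra.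
  exact Hn.
Qed.

(* [y ^ (i + 2) <= (i + 2)! e ^ y] with [y = 1 / x]. *)
Lemma flat_exp_le_sq i x : flat_exp i x <= INR (fact (S (S i))) * (x * x).
Proof.
  destruct (Rlt_le_dec 0 x) as [Hx | Hx];
    [| rewrite flat_exp_nonpos by exact Hx; pose proof (INR_fact_lt_0 (S (S i))); nra].
  rewrite flat_exp_pos by exact Hx.
  pose proof (pow_le_fact_exp (S (S i)) (/ x) (Rlt_le _ _ (Rinv_0_lt_compat _ Hx))) as Hb.
  assert (Hexp : exp (- / x) * exp (/ x) = 1) by (rewrite <- exp_plus, Rplus_opp_l; apply exp_0).
  replace (exp (- / x) * (/ x) ^ i)
    with (exp (- / x) * (/ x) ^ S (S i) * (x * x)) by (simpl; field; lra).
  apply Rmult_le_compat_r; [nra |].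
  rewrite <- (Rmult_1_l (INR _)), <- Hexp, Rmult_assoc.
  apply Rmult_le_compat_l; [apply Rlt_le, exp_pos | lra].
Qed.

Lemma is_derive_0_of_sq_bound (F : R -> R) C :
  F 0 = 0 -> (forall h, Rabs (F h) <= C * (h * h)) -> is_derive F 0 0.
Proof.
  intros HF0 Hb; apply is_derive_Reals; intros e He.
  assert (HC : 0 <= C) by (specialize (Hb 1); pose proof (Rabs_pos (F 1)); lra).
  assert (Hd : 0 < e / (C + 1)) by (apply Rdiv_lt_0_compat; lra).
  exists (mkposreal _ Hd); intros h Hh0 Hh; simpl in Hh.
  rewrite Rplus_0_l, HF0, Rminus_0_r, Rminus_0_r.
  unfold Rdiv; rewrite Rabs_mult, Rabs_inv.
  assert (Hah : 0 < Rabs h) by (apply Rabs_pos_lt, Hh0).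
  apply (Rmult_lt_reg_r (Rabs h)); [exact Hah |].
  rewrite Rmult_assoc, Rinv_l, Rmult_1_r by lra.
  apply (Rle_lt_trans _ (C * (Rabs h * Rabs h))).
  - rewrite <- Rabs_mult, (Rabs_pos_eq (h * h)) by nra; apply Hb.
  - apply (Rle_lt_trans _ ((C + 1) * Rabs h * Rabs h)); [nra |].
    apply Rmult_lt_compat_r; [exact Hah |].
    apply (Rmult_lt_reg_l (/ (C + 1))); [apply Rinv_0_lt_compat; lra |].
    rewrite <- Rmult_assoc, Rinv_l, Rmult_1_l by lra; rewrite Rmult_comm; exact Hh.
Qed.

Lemma is_derive_flat_exp i x :
  is_derive (flat_exp i) x (flat_exp (S (S i)) x - INR i * flat_exp (S i) x).
Proof.
  destruct (Rtotal_order x 0) as [Hx | [-> | Hx]].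
  - rewrite !flat_exp_nonpos by lra; rewrite Rmult_0_r, Rminus_0_r.
    apply (is_derive_ext_loc (fun _ => 0)); [| apply (is_derive_const 0)].
    assert (Hp : 0 < - x) by lra; exists (mkposreal _ Hp); intros y Hy.
    apply Rabs_lt_between' in Hy; simpl in Hy.
    symmetry; apply flat_exp_nonpos; lra.
  - rewrite !flat_exp_nonpos by lra; rewrite Rmult_0_r, Rminus_0_r.
    apply (is_derive_0_of_sq_bound _ (INR (fact (S (S i))))); [apply flat_exp_nonpos; lra |].
    intro h; rewrite Rabs_pos_eq by apply flat_exp_ge_0; apply flat_exp_le_sq.
  - rewrite !flat_exp_pos by exact Hx.
    apply (is_derive_ext_loc (fun y => exp (- / y) * (/ y) ^ i)).
    + exists (mkposreal x Hx); intros y Hy.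
      apply Rabs_lt_between' in Hy; simpl in Hy.
      symmetry; apply flat_exp_pos; lra.
    + auto_derive; [lra |].
      destruct i as [|j]; simpl; field; lra.
Qed.

Lemma smooth_flat_exp i : smooth (flat_exp i).
Proof.
  intro n; revert i.
  induction n as [[|[|n]] IH] using Wf_nat.lt_wf_ind; intros i x; [exact I | |].
  - eexists; apply is_derive_flat_exp.
  - apply (proj2 (ex_derive_n_SS _ n x)).
    apply (ex_derive_n_ext (fun t => flat_exp (S (S i)) t - INR i * flat_exp (S i) t)).
    + intro t; symmetry; apply is_derive_unique, is_derive_flat_exp.
    + apply ex_derive_n_minus; apply filter_forall; intros y k Hk;
        [| apply ex_derive_n_scal_l]; apply IH; lia.
Qed.

Definition bump (t : R) : R := flat_exp 0 t * flat_exp 0 (1 - t).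

Definition smooth_step (x : R) : R := RInt bump 0 x / RInt bump 0 1.

Lemma smooth_bump : smooth bump.
Proof.
  apply smooth_mult; [apply smooth_flat_exp |].
  apply (smooth_ext (fun t => flat_exp 0 (-1 * t + 1))); [intro t; f_equal; ring |].
  apply smooth_comp_affine, smooth_flat_exp.
Qed.

Lemma bump_ge_0 t : 0 <= bump t.
Proof. apply Rmult_le_pos; apply flat_exp_ge_0. Qed.

Lemma bump_eq_0 t : t <= 0 \/ 1 <= t -> bump t = 0.
Proof.
  unfold bump; intros [Ht | Ht];
    [rewrite (flat_exp_nonpos 0 t) | rewrite (flat_exp_nonpos 0 (1 - t))]; (ring || lra).
Qed.

Lemma RInt_bump_gt_0 : 0 < RInt bump 0 1.
Proof.
  apply RInt_gt_0; [lra | apply smooth_continuity, smooth_bump |].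
  intros x Hx; apply Rmult_lt_0_compat; apply flat_exp_gt_0; lra.
Qed.

Lemma smooth_smooth_step : smooth smooth_step.
Proof.
  apply (smooth_ext (fun x => / RInt bump 0 1 * RInt bump 0 x)); [intro x; apply Rmult_comm |].
  apply smooth_scal, smooth_RInt, smooth_bump.
Qed.

Lemma smooth_step_eq_0 x : x <= 0 -> smooth_step x = 0.
Proof.
  intro Hx; unfold smooth_step; rewrite RInt_eq_0; [unfold Rdiv; ring |].
  rewrite Rmin_right, Rmax_left by exact Hx; intros y Hy; apply bump_eq_0; lra.
Qed.

Lemma smooth_step_eq_1 x : 1 <= x -> smooth_step x = 1.
Proof.
  intro Hx; pose proof RInt_bump_gt_0.
  unfold smooth_step; rewrite <- (RInt_split bump 0 1 x) by apply smooth_continuity, smooth_bump.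
  rewrite (RInt_eq_0 bump 1 x); [field; lra |].
  rewrite Rmin_left, Rmax_right by exact Hx; intros y Hy; apply bump_eq_0; lra.
Qed.

Lemma smooth_step_range x : 0 <= smooth_step x <= 1.
Proof.
  pose proof RInt_bump_gt_0 as HZ.
  destruct (Rle_lt_dec x 0) as [H0 | H0]; [rewrite smooth_step_eq_0; lra |].
  destruct (Rle_lt_dec 1 x) as [H1 | H1]; [rewrite smooth_step_eq_1; lra |].
  assert (Hc : continuity bump) by apply smooth_continuity, smooth_bump.
  pose proof (RInt_ge_0 bump 0 x ltac:(lra) (ex_RInt_continuity _ _ _ Hc) (fun y _ => bump_ge_0 y)).
  pose proof (RInt_ge_0 bump x 1 ltac:(lra) (ex_RInt_continuity _ _ _ Hc) (fun y _ => bump_ge_0 y)).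
  pose proof (RInt_split bump 0 x 1 Hc).
  unfold smooth_step; split.
  - apply Rdiv_le_0_compat; lra.
  - apply (Rmult_le_reg_r (RInt bump 0 1)); [exact HZ |].
    unfold Rdiv; rewrite Rmult_assoc, Rinv_l; lra.
Qed.

Definition plateau (a b d t : R) : R :=
  smooth_step ((t - a) / d - 1) * smooth_step ((b - t) / d - 1).

Section Plateau.

Variables a b d : R.
Hypothesis Hd : 0 < d.

Lemma smooth_plateau : smooth (plateau a b d).
Proof.
  apply smooth_mult.
  - apply (smooth_ext (fun t => smooth_step (/ d * t + (- a / d - 1))));
      [intro t; f_equal; field; lra |].
    apply smooth_comp_affine, smooth_smooth_step.
  - apply (smooth_ext (fun t => smooth_step (- / d * t + (b / d - 1))));
      [intro t; f_equal; field; lra |].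
    apply smooth_comp_affine, smooth_smooth_step.
Qed.

Lemma plateau_range t : 0 <= plateau a b d t <= 1.
Proof.
  unfold plateau; pose proof (smooth_step_range ((t - a) / d - 1)).
  pose proof (smooth_step_range ((b - t) / d - 1)); nra.
Qed.

Lemma plateau_eq_0 t : t <= a + d \/ b - d <= t -> plateau a b d t = 0.
Proof.
  unfold plateau; intros [Ht | Ht];
    [rewrite (smooth_step_eq_0 ((t - a) / d - 1)) | rewrite (smooth_step_eq_0 ((b - t) / d - 1))];
    try ring; apply Rle_minus, (proj1 (Rdiv_le_1 _ d Hd)); lra.
Qed.

Lemma plateau_eq_1 t : a + 2 * d <= t <= b - 2 * d -> plateau a b d t = 1.
Proof.
  intro Ht; unfold plateau.
  rewrite !smooth_step_eq_1; [ring | |]; apply (Rmult_le_reg_r d); try exact Hd; field_simplify; lra.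
Qed.

Lemma plateau_sym t : plateau a b d (a + b - t) = plateau a b d t.
Proof.
  unfold plateau; replace (a + b - t - a) with (b - t) by ring.
  replace (b - (a + b - t)) with (t - a) by ring; apply Rmult_comm.
Qed.

End Plateau.

Lemma RInt_plateau_defect W a b d : 0 < d -> 4 * d <= b - a -> continuity W ->
  (forall t, a < t < b -> 0 <= W t <= 1) ->
  RInt (fun s => (1 - plateau a b d s) * W s) a b <= 4 * d.
Proof.
  intros Hd Hab HW HW1.
  assert (Hc : continuity (fun s => (1 - plateau a b d s) * W s)).
  { pose proof (smooth_continuity _ (smooth_plateau a b d Hd)); reg. }
  assert (Hle : forall u v, a <= u -> u <= v -> v <= b ->
    RInt (fun s => (1 - plateau a b d s) * W s) u v <= 1 * (v - u)).
  { intros u v Hu Huv Hv; apply RInt_le_const; auto; intros x Hx.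
    pose proof (plateau_range a b d x); specialize (HW1 x ltac:(lra)); nra. }
  rewrite <- (RInt_split _ a (b - 2 * d) b Hc), <- (RInt_split _ a (a + 2 * d) (b - 2 * d) Hc).
  rewrite (RInt_eq_0 _ (a + 2 * d) (b - 2 * d)).
  - pose proof (Hle a (a + 2 * d) ltac:(lra) ltac:(lra) ltac:(lra)).
    pose proof (Hle (b - 2 * d) b ltac:(lra) ltac:(lra) ltac:(lra)); lra.
  - rewrite Rmin_left, Rmax_right by lra; intros x Hx.
    rewrite plateau_eq_1 by lra; ring.
Qed.

(* [g = c (1 + μ B)] with [B] a plateau so wide that [∫ B W > (1 - k) ∫ W]; this keeps
   [1 + μ > 0] when [μ < 0]. *)
Lemma exists_speed_profile (W : R -> R) (a b c k : R) :
  a < b -> 0 < c -> 0 < k -> continuity W ->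
  (forall t, a < t < b -> 0 < W t <= 1) ->
  exists (g : R -> R) (delta : R),
    smooth g /\ (forall t, 0 < g t) /\ 0 < delta /\
    (forall t, t < a + delta \/ b - delta < t -> g t = c) /\
    (forall t, g (a + b - t) = g t) /\
    RInt (fun s => g s * W s) a b = k * (c * RInt W a b).
Proof.
  intros Hab Hc Hk HW HW1.
  set (I0 := RInt W a b).
  assert (HI0 : 0 < I0) by (apply RInt_gt_0; auto; intros; apply HW1; auto).
  assert (HI0ba : I0 <= b - a).
  { rewrite <- (Rmult_1_l (b - a)); apply RInt_le_const; [lra | exact HW |].
    intros; apply HW1; auto. }
  set (d := k * I0 / (8 * (k + 1))).
  assert (Hd : 0 < d) by (unfold d; apply Rdiv_lt_0_compat; nra).
  assert (Hd4 : 4 * d * (k + 1) = k * I0 / 2) by (unfold d; field; lra).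
  set (B := plateau a b d).
  set (I1 := RInt (fun s => B s * W s) a b).
  assert (HB : continuity B) by apply smooth_continuity, smooth_plateau, Hd.
  assert (Hdefect : I0 - I1 <= 4 * d).
  { replace (I0 - I1) with (RInt (fun s => (1 - B s) * W s) a b).
    - apply RInt_plateau_defect; auto; [nra |]. intros t Ht; specialize (HW1 t Ht); lra.
    - rewrite (RInt_ext _ (fun s => 1 * W s + (-1) * (B s * W s))) by (intros; simpl; ring).
      rewrite RInt_lin_comb by (auto; reg); unfold I0, I1; simpl; ring. }
  assert (HI1 : 0 < I1) by nra.
  set (mu := (k - 1) * I0 / I1).
  assert (Hmu : mu * I1 = (k - 1) * I0) by (unfold mu; field; lra).
  exists (fun t => c * (1 + mu * B t)), d.
  split; [| split; [| split; [exact Hd | split; [| split]]]].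
  - apply smooth_scal, smooth_plus; [apply smooth_const |].
    apply smooth_scal, smooth_plateau, Hd.
  - intro t; apply Rmult_lt_0_compat; [exact Hc |].
    pose proof (plateau_range a b d t) as HBt; fold B in HBt.
    assert (H4d : 4 * d < k * I0) by nra.
    assert (Hmu1 : 0 < 1 + mu).
    { apply (Rmult_lt_reg_l I1); [exact HI1 |].
      rewrite Rmult_0_r, Rmult_plus_distr_l, Rmult_1_r, (Rmult_comm I1 mu), Hmu; lra. }
    destruct (Rle_lt_dec 0 mu); nra.
  - intros t Ht; unfold B; rewrite plateau_eq_0 by (auto; lra); ring.
  - intro t; unfold B; rewrite plateau_sym; reflexivity.
  - rewrite (RInt_ext _ (fun s => c * W s + (c * mu) * (B s * W s))) by (intros; simpl; ring).
    rewrite RInt_lin_comb by (auto; reg).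
    fold I0 I1; rewrite Rmult_assoc, Hmu; simpl; ring.
Qed.

Lemma V3_ext (u v : V3) : vx u = vx v -> vy u = vy v -> vz u = vz v -> u = v.
Proof.
  destruct u as [[u1 u2] u3], v as [[v1 v2] v3]; unfold vx, vy, vz; simpl.
  intros -> -> ->; reflexivity.
Qed.

Ltac vec_unfold := unfold vsub, vadd, vscale, vdot, mkV, vx, vy, vz; simpl.
Ltac vec_ring := apply V3_ext; vec_unfold; ring.

Lemma vdot_comm u v : vdot u v = vdot v u.
Proof. unfold vdot; ring. Qed.

Lemma vdot_scale_l k u v : vdot (vscale k u) v = k * vdot u v.
Proof. vec_unfold; ring. Qed.

Lemma vdot_scale_r k u v : vdot u (vscale k v) = k * vdot u v.
Proof. vec_unfold; ring. Qed.

Lemma vdot_comb u v x y (e : V3) :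
  vdot (vadd (vscale x u) (vscale y v)) e = x * vdot u e + y * vdot v e.
Proof. vec_unfold; ring. Qed.

Lemma vdot_0_r u : vdot u (mkV 0 0 0) = 0.
Proof. vec_unfold; ring. Qed.

Lemma vdot_self_ge_0 v : 0 <= vdot v v.
Proof. destruct v as [[x y] z]; vec_unfold; nra. Qed.

Lemma vnorm_eq v r : 0 <= r -> vnorm v = r -> vdot v v = r * r.
Proof. intros Hr <-; unfold vnorm; rewrite sqrt_sqrt; [ring | apply vdot_self_ge_0]. Qed.

Lemma on_S2_vdot v : on_S2 v -> vdot v v = 1.
Proof. intro Hv; rewrite (vnorm_eq v 1); [ring | lra | exact Hv]. Qed.

Lemma vnorm_scale_unit k v : 0 <= k -> vdot v v = 1 -> vnorm (vscale k v) = k.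
Proof.
  intros Hk Hv; unfold vnorm; rewrite vdot_scale_l, vdot_scale_r, Hv, Rmult_1_r.
  apply sqrt_square, Hk.
Qed.

Lemma vdot_le_vnorm (q e : V3) : vdot e e = 1 -> vdot q e <= vnorm q.
Proof.
  intro He; unfold vnorm.
  destruct (Rle_lt_dec (vdot q e) 0) as [Hn | Hp]; [pose proof (sqrt_pos (vdot q q)); lra |].
  apply Rsqr_incr_0_var; [| apply sqrt_pos].
  rewrite Rsqr_sqrt by apply vdot_self_ge_0; unfold Rsqr.
  destruct q as [[q1 q2] q3], e as [[e1 e2] e3]; revert He; vec_unfold; intro He.
  assert (Hlagrange : (q1 * e1 + q2 * e2 + q3 * e3) * (q1 * e1 + q2 * e2 + q3 * e3)
    + ((q1 * e2 - q2 * e1) * (q1 * e2 - q2 * e1) + (q1 * e3 - q3 * e1) * (q1 * e3 - q3 * e1)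
       + (q2 * e3 - q3 * e2) * (q2 * e3 - q3 * e2))
    = (q1 * q1 + q2 * q2 + q3 * q3) * (e1 * e1 + e2 * e2 + e3 * e3)) by ring.
  rewrite He, Rmult_1_r in Hlagrange.
  pose proof (Rle_0_sqr (q1 * e2 - q2 * e1)); pose proof (Rle_0_sqr (q1 * e3 - q3 * e1));
    pose proof (Rle_0_sqr (q2 * e3 - q3 * e2)); unfold Rsqr in *; lra.
Qed.

Definition vcross (u v : V3) : V3 :=
  mkV (vy u * vz v - vz u * vy v) (vz u * vx v - vx u * vz v) (vx u * vy v - vy u * vx v).

Lemma vdot_vcross_self u v :
  vdot (vcross u v) (vcross u v) = vdot u u * vdot v v - vdot u v * vdot u v.
Proof. unfold vcross; vec_unfold; ring. Qed.

Lemma vcross_gram u v w :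
  vscale (vdot (vcross u v) (vcross u v)) w =
  vadd (vscale (vdot w u * vdot v v - vdot w v * vdot u v) u)
    (vadd (vscale (vdot w v * vdot u u - vdot w u * vdot u v) v)
      (vscale (vdot w (vcross u v)) (vcross u v))).
Proof. unfold vcross; vec_ring. Qed.

(* Both [x] and [y] are multiples of the unit normal [vcross u v]. *)
Lemma orthogonal_complement_parallel (u v x y : V3) :
  vdot u u = 1 -> vdot v v = 1 -> vdot u v = 0 ->
  vdot x u = 0 -> vdot x v = 0 -> vdot y u = 0 -> vdot y v = 0 ->
  vscale (vdot y y) x = vscale (vdot x y) y.
Proof.
  intros Hu Hv Huv Hxu Hxv Hyu Hyv.
  assert (Hline : forall w, vdot w u = 0 -> vdot w v = 0 -> exists k, w = vscale k (vcross u v)).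
  { intros w Hwu Hwv; exists (vdot w (vcross u v)).
    pose proof (vcross_gram u v w) as G.
    rewrite vdot_vcross_self, Hu, Hv, Huv, Hwu, Hwv in G.
    transitivity (vscale (1 * 1 - 0 * 0) w); [vec_ring | rewrite G; vec_ring]. }
  destruct (Hline x Hxu Hxv) as [kx ->], (Hline y Hyu Hyv) as [ky ->].
  vec_ring.
Qed.

Definition has_vderiv (u : R -> V3) (t : R) (du : V3) : Prop :=
  is_derive (fun s => vx (u s)) t (vx du) /\
  is_derive (fun s => vy (u s)) t (vy du) /\
  is_derive (fun s => vz (u s)) t (vz du).

Lemma vderiv_unique u t du : has_vderiv u t du -> vderiv u t = du.
Proof. intros [Hx [Hy Hz]]; apply V3_ext; apply is_derive_unique; assumption. Qed.

Lemma has_vderiv_smooth3 u t : smooth3 u -> has_vderiv u t (vderiv u t).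
Proof.
  intros [Hx [Hy Hz]]; repeat split; apply Derive_correct, smooth_ex_derive; assumption.
Qed.

Lemma has_vderiv_scal k u t du :
  has_vderiv u t du -> has_vderiv (fun s => vscale k (u s)) t (vscale k du).
Proof.
  intros [Hx [Hy Hz]].
  exact (conj (is_derive_scal _ _ k _ Hx) (conj (is_derive_scal _ _ k _ Hy) (is_derive_scal _ _ k _ Hz))).
Qed.

Lemma has_vderiv_sub_const u C t du :
  has_vderiv u t du -> has_vderiv (fun s => vsub (u s) C) t du.
Proof.
  assert (Hsub : forall (f : R -> R) c d, is_derive f t d -> is_derive (fun s => f s + -1 * c) t d).
  { intros f c d Hf; replace d with (d + 0) by ring.
    exact (is_derive_plus f (fun _ => -1 * c) t d 0 Hf (is_derive_const _ t)). }
  intros [Hx [Hy Hz]].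
  exact (conj (Hsub _ _ _ Hx) (conj (Hsub _ _ _ Hy) (Hsub _ _ _ Hz))).
Qed.

Lemma has_vderiv_const (v : V3) t : has_vderiv (fun _ => v) t (mkV 0 0 0).
Proof.
  exact (conj (is_derive_const (vx v) t) (conj (is_derive_const (vy v) t) (is_derive_const (vz v) t))).
Qed.

Lemma is_derive_vdot u v t du dv : has_vderiv u t du -> has_vderiv v t dv ->
  is_derive (fun s => vdot (u s) (v s)) t (vdot du (v t) + vdot (u t) dv).
Proof.
  intros [Ux [Uy Uz]] [Vx [Vy Vz]].
  assert (Hprod : forall f g df dg, is_derive f t df -> is_derive g t dg ->
    is_derive (fun s => f s * g s) t (df * g t + f t * dg)).
  { intros f g df dg Hf Hg; apply (is_derive_mult f g); auto; intros; apply Rmult_comm. }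
  replace (vdot du (v t) + vdot (u t) dv)
    with ((vx du * vx (v t) + vx (u t) * vx dv) + (vy du * vy (v t) + vy (u t) * vy dv)
          + (vz du * vz (v t) + vz (u t) * vz dv)) by (unfold vdot; ring).
  exact (is_derive_plus _ _ t _ _
    (is_derive_plus _ _ t _ _ (Hprod _ _ _ _ Ux Vx) (Hprod _ _ _ _ Uy Vy)) (Hprod _ _ _ _ Uz Vz)).
Qed.

Lemma integral_curve_start g alpha a : integral_curve g alpha a a = mkV 0 0 0.
Proof. unfold integral_curve; rewrite !RInt_point; reflexivity. Qed.

Lemma has_vderiv_integral_curve g alpha a t : smooth g -> smooth3 alpha ->
  has_vderiv (integral_curve g alpha a) t (vscale (g t) (alpha t)).
Proof.
  intros Hg [Hx [Hy Hz]].
  assert (Hc : forall h, smooth h ->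
    is_derive (fun s => RInt (fun x => g x * h x) a s) t (g t * h t)).
  { intros h Hh; apply (is_derive_RInt_continuity (fun x => g x * h x)).
    apply smooth_continuity, smooth_mult; assumption. }
  exact (conj (Hc _ Hx) (conj (Hc _ Hy) (Hc _ Hz))).
Qed.

Lemma smooth3_integral_curve g alpha a : smooth g -> smooth3 alpha ->
  smooth3 (integral_curve g alpha a).
Proof. intros Hg [Hx [Hy Hz]]; repeat split; apply smooth_RInt, smooth_mult; assumption. Qed.

Lemma vnorm_vderiv_integral_curve g alpha a t : smooth g -> smooth3 alpha ->
  0 <= g t -> on_S2 (alpha t) -> vnorm (vderiv (integral_curve g alpha a) t) = g t.
Proof.
  intros Hg Halpha Hgt Hunit.
  rewrite (vderiv_unique _ _ _ (has_vderiv_integral_curve g alpha a t Hg Halpha)).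
  apply vnorm_scale_unit; [exact Hgt | apply on_S2_vdot, Hunit].
Qed.

Lemma integral_curve_ext f g alpha a t : a <= t ->
  (forall s, a <= s <= t -> f s = g s) ->
  integral_curve f alpha a t = integral_curve g alpha a t.
Proof.
  intros Hat Hfg; unfold integral_curve.
  assert (Hext : forall h, RInt (fun s => f s * h s) a t = RInt (fun s => g s * h s) a t).
  { intro h; apply RInt_ext; rewrite Rmin_left, Rmax_right by exact Hat.
    intros s Hs; rewrite Hfg by lra; reflexivity. }
  rewrite !Hext; reflexivity.
Qed.

Definition vpolar (e1 e2 : V3) (theta : R) : V3 :=
  vadd (vscale (cos theta) e1) (vscale (- sin theta) e2).

Lemma vpolar_unit e1 e2 theta : vdot e1 e1 = 1 -> vdot e2 e2 = 1 -> vdot e1 e2 = 0 ->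
  vdot (vpolar e1 e2 theta) (vpolar e1 e2 theta) = 1.
Proof.
  intros H11 H22 H12.
  replace (vdot (vpolar e1 e2 theta) (vpolar e1 e2 theta))
    with (cos theta ^ 2 * vdot e1 e1 + sin theta ^ 2 * vdot e2 e2
          - 2 * cos theta * sin theta * vdot e1 e2) by (unfold vpolar; vec_unfold; ring).
  rewrite H11, H22, H12; pose proof (sin2_cos2 theta); unfold Rsqr in *; simpl; lra.
Qed.

Lemma integral_curve_planar g alpha a b w m e1 e2 t : continuity g ->
  (forall s, a <= s <= b -> alpha s = vpolar e1 e2 (w * (s - m))) -> a <= t <= b ->
  integral_curve g alpha a t =
    vadd (vscale (RInt (fun s => g s * cos (w * (s - m))) a t) e1)
         (vscale (RInt (fun s => g s * - sin (w * (s - m))) a t) e2).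
Proof.
  intros Hg Halpha Ht.
  assert (Hcomp : forall pr : V3 -> R,
    (forall p q x y, pr (vadd (vscale x p) (vscale y q)) = x * pr p + y * pr q) ->
    RInt (fun s => g s * pr (alpha s)) a t
      = RInt (fun s => g s * cos (w * (s - m))) a t * pr e1
        + RInt (fun s => g s * - sin (w * (s - m))) a t * pr e2).
  { intros pr Hpr.
    rewrite (RInt_ext _ (fun s => pr e1 * (g s * cos (w * (s - m))) + pr e2 * (g s * - sin (w * (s - m))))).
    - rewrite RInt_lin_comb by reg; simpl; ring.
    - rewrite Rmin_left, Rmax_right by lra; intros s Hs.
      rewrite Halpha by lra; unfold vpolar; rewrite Hpr; simpl; ring. }
  apply V3_ext;
    [change (vx (integral_curve g alpha a t)) with (RInt (fun s => g s * vx (alpha s)) a t)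
    | change (vy (integral_curve g alpha a t)) with (RInt (fun s => g s * vy (alpha s)) a t)
    | change (vz (integral_curve g alpha a t)) with (RInt (fun s => g s * vz (alpha s)) a t)];
    rewrite Hcomp; reflexivity.
Qed.

(** * Uniform rotation *)

Lemma is_derive_const_on (F : R -> R) (a b t K l : R) :
  a < t < b -> (forall s, a < s < b -> F s = K) -> is_derive F t l -> l = 0.
Proof.
  intros Ht HF HD.
  assert (Hloc : is_derive (fun _ => K) t l).
  { apply (is_derive_ext_loc F); [| exact HD].
    assert (Hp : 0 < Rmin (t - a) (b - t)) by (apply Rmin_glb_lt; lra).
    exists (mkposreal _ Hp); intros s Hs; apply Rabs_lt_between' in Hs; simpl in Hs.
    pose proof (Rmin_l (t - a) (b - t)); pose proof (Rmin_r (t - a) (b - t)).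
    apply HF; lra. }
  rewrite <- (is_derive_unique _ _ _ Hloc); apply Derive_const.
Qed.

Lemma derive_0_const (E : R -> R) (a b s t : R) : (forall x, ex_derive E x) ->
  (forall x, a < x < b -> is_derive E x 0) -> a <= s <= b -> a <= t <= b -> E t = E s.
Proof.
  intros HE HE0 Hs Ht.
  destruct (MVT_gen E s t (fun _ => 0)) as [x [_ Hx]]; [| | lra].
  - intros x Hx; apply HE0.
    pose proof (Rmin_glb s t a); pose proof (Rmax_lub s t b); lra.
  - intros x _; apply continuity_pt_filterlim.
    apply (ex_derive_continuous (K := R_AbsRing) (V := R_NormedModule)), HE.
Qed.

(* The energy [E] of the difference with the explicit solution is constant and vanishes at [m]. *)
Lemma rotation_ode_unique (w : R) (y z : R -> R) a b m :
  (forall t, ex_derive y t) -> (forall t, ex_derive z t) ->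
  (forall t, a < t < b -> is_derive y t (w * z t)) ->
  (forall t, a < t < b -> is_derive z t (- w * y t)) ->
  a <= m <= b -> forall t, a <= t <= b ->
  y t = cos (w * (t - m)) * y m + sin (w * (t - m)) * z m /\
  z t = cos (w * (t - m)) * z m + - sin (w * (t - m)) * y m.
Proof.
  intros Hy Hz Hyd Hzd Hm t Ht.
  set (E := fun s => (y s - (cos (w * (s - m)) * y m + sin (w * (s - m)) * z m)) ^ 2
                   + (z s - (cos (w * (s - m)) * z m + - sin (w * (s - m)) * y m)) ^ 2).
  assert (HE : forall x, ex_derive E x) by (intro x; unfold E; auto_derive; auto).
  assert (HE0 : forall x, a < x < b -> is_derive E x 0).
  { intros x Hx; unfold E; auto_derive; [auto |].
    replace (Derive (fun s => y s) x) with (w * z x) by (symmetry; apply is_derive_unique, Hyd, Hx).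
    replace (Derive (fun s => z s) x) with (- w * y x) by (symmetry; apply is_derive_unique, Hzd, Hx).
    ring. }
  pose proof (derive_0_const E a b m t HE HE0 Hm Ht) as Et.
  assert (Em : E m = 0) by (unfold E; rewrite Rminus_diag, Rmult_0_r, cos_0, sin_0; ring).
  rewrite Em in Et; unfold E in Et.
  set (p := y t - _) in Et; set (q := z t - _) in Et.
  assert (Hp : p * p = 0) by (simpl in Et; nra).
  assert (Hq : q * q = 0) by (simpl in Et; nra).
  split; apply Rminus_diag_uniq;
    [destruct (Rmult_integral _ _ Hp) | destruct (Rmult_integral _ _ Hq)]; auto.
Qed.

Lemma vrotation_ode_unique (w : R) (Y Z dY dZ : R -> V3) a b m :
  (forall t, has_vderiv Y t (dY t)) -> (forall t, has_vderiv Z t (dZ t)) ->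
  (forall t, a < t < b -> dY t = vscale w (Z t)) ->
  (forall t, a < t < b -> dZ t = vscale (- w) (Y t)) ->
  a <= m <= b -> forall t, a <= t <= b ->
  Y t = vadd (vscale (cos (w * (t - m))) (Y m)) (vscale (sin (w * (t - m))) (Z m)) /\
  Z t = vpolar (Z m) (Y m) (w * (t - m)).
Proof.
  intros HY HZ HdY HdZ Hm t Ht.
  assert (Hcomp : forall pr : V3 -> R, (forall k u, pr (vscale k u) = k * pr u) ->
    (forall s, is_derive (fun x => pr (Y x)) s (pr (dY s))) ->
    (forall s, is_derive (fun x => pr (Z x)) s (pr (dZ s))) ->
    pr (Y t) = cos (w * (t - m)) * pr (Y m) + sin (w * (t - m)) * pr (Z m) /\
    pr (Z t) = cos (w * (t - m)) * pr (Z m) + - sin (w * (t - m)) * pr (Y m)).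
  { intros pr Hpr DY DZ.
    apply (rotation_ode_unique w (fun x => pr (Y x)) (fun x => pr (Z x)) a b); auto.
    - intro s; eexists; apply DY.
    - intro s; eexists; apply DZ.
    - intros s Hs; rewrite <- Hpr, <- HdY by exact Hs; apply DY.
    - intros s Hs; rewrite <- Hpr, <- HdZ by exact Hs; apply DZ. }
  destruct (Hcomp vx (fun _ _ => eq_refl) (fun s => proj1 (HY s)) (fun s => proj1 (HZ s)))
    as [X1 X2].
  destruct (Hcomp vy (fun _ _ => eq_refl) (fun s => proj1 (proj2 (HY s)))
    (fun s => proj1 (proj2 (HZ s)))) as [Y1 Y2].
  destruct (Hcomp vz (fun _ _ => eq_refl) (fun s => proj2 (proj2 (HY s)))
    (fun s => proj2 (proj2 (HZ s)))) as [Z1 Z2].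
  split; apply V3_ext; assumption.
Qed.

(* Differentiating the constraints shows that [dA] is orthogonal to [A] and [n], like [D]. *)
Lemma circle_tangent_ode (a b c r : R) (D A dA : R -> V3) (n : V3) : 0 < c ->
  (forall t, a < t < b -> has_vderiv D t (vscale c (A t))) ->
  (forall t, a < t < b -> has_vderiv A t (dA t)) ->
  (forall t, a < t < b -> vdot (D t) (D t) = r * r) ->
  (forall t, a < t < b -> vdot (D t) n = 0) -> vdot n n = 1 ->
  (forall t, a < t < b -> vdot (A t) (A t) = 1) ->
  forall t, a < t < b -> vdot (D t) (A t) = 0 /\ vscale (r * r) (dA t) = vscale (- c) (D t).
Proof.
  intros Hc HD HA Hr Hn Hnn Hunit.
  assert (Hn0 : forall t, has_vderiv (fun _ => n) t (mkV 0 0 0)) by (intro; apply has_vderiv_const).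
  assert (HDA : forall t, a < t < b -> vdot (D t) (A t) = 0).
  { intros t Ht; pose proof (is_derive_vdot _ _ t _ _ (HD t Ht) (HD t Ht)) as H.
    apply (is_derive_const_on _ a b t (r * r)) in H; [| exact Ht | exact Hr].
    rewrite vdot_scale_l, vdot_scale_r, (vdot_comm (A t)) in H; nra. }
  assert (HAn : forall t, a < t < b -> vdot (A t) n = 0).
  { intros t Ht; pose proof (is_derive_vdot _ _ t _ _ (HD t Ht) (Hn0 t)) as H.
    apply (is_derive_const_on _ a b t 0) in H; [| exact Ht | exact Hn].
    rewrite vdot_scale_l, vdot_0_r in H; nra. }
  intros t Ht; split; [exact (HDA t Ht) |].
  assert (HDdA : vdot (dA t) (D t) = - c).
  { pose proof (is_derive_vdot _ _ t _ _ (HD t Ht) (HA t Ht)) as H.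
    apply (is_derive_const_on _ a b t 0) in H; [| exact Ht | exact HDA].
    rewrite vdot_scale_l, Hunit, vdot_comm in H by exact Ht; lra. }
  assert (HAdA : vdot (dA t) (A t) = 0).
  { pose proof (is_derive_vdot _ _ t _ _ (HA t Ht) (HA t Ht)) as H.
    apply (is_derive_const_on _ a b t 1) in H; [| exact Ht | exact Hunit].
    rewrite (vdot_comm (A t)) in H; lra. }
  assert (HdAn : vdot (dA t) n = 0).
  { pose proof (is_derive_vdot _ _ t _ _ (HA t Ht) (Hn0 t)) as H.
    apply (is_derive_const_on _ a b t 0) in H; [| exact Ht | exact HAn].
    rewrite vdot_0_r in H; lra. }
  rewrite <- (Hr t Ht), <- HDdA.
  apply (orthogonal_complement_parallel (A t) n); auto; rewrite vdot_comm; auto.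
Qed.

Lemma circle_arc_rotation (a b c r : R) (D A dD : R -> V3) (n : V3) :
  a < b -> 0 < c -> 0 < r -> smooth3 A ->
  (forall t, has_vderiv D t (dD t)) -> (forall t, a < t < b -> dD t = vscale c (A t)) ->
  (forall t, a < t < b -> vdot (D t) (D t) = r * r) ->
  (forall t, a < t < b -> vdot (D t) n = 0) -> vdot n n = 1 ->
  (forall t, a < t < b -> vdot (A t) (A t) = 1) ->
  exists e1 e2 : V3, vdot e1 e1 = 1 /\ vdot e2 e2 = 1 /\ vdot e1 e2 = 0 /\
    forall t, a <= t <= b ->
      A t = vpolar e1 e2 (c / r * (t - (a + b) / 2)) /\
      D t = vscale r (vadd (vscale (sin (c / r * (t - (a + b) / 2))) e1)
                           (vscale (cos (c / r * (t - (a + b) / 2))) e2)).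
Proof.
  intros Hab Hc Hr HA HD HdD Hrad Hn Hnn Hunit.
  assert (Hode : forall t, a < t < b ->
    vdot (D t) (A t) = 0 /\ vscale (r * r) (vderiv A t) = vscale (- c) (D t)).
  { apply (circle_tangent_ode a b c r D A (vderiv A) n Hc); auto.
    - intros t Ht; rewrite <- HdD by exact Ht; apply HD.
    - intros t _; apply has_vderiv_smooth3, HA. }
  set (w := c / r); set (m := (a + b) / 2).
  assert (Hm : a < m < b) by (unfold m; lra).
  set (Y := fun t => vscale (/ r) (D t)).
  assert (Hrot : forall t, a <= t <= b ->
    Y t = vadd (vscale (cos (w * (t - m))) (Y m)) (vscale (sin (w * (t - m))) (A m)) /\
    A t = vpolar (A m) (Y m) (w * (t - m))).
  { apply (vrotation_ode_unique w Y A (fun t => vscale (/ r) (dD t)) (vderiv A) a b m).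
    - intro t; apply has_vderiv_scal, HD.
    - intro t; apply has_vderiv_smooth3, HA.
    - intros t Ht; rewrite HdD by exact Ht; unfold w; apply V3_ext; vec_unfold; field; lra.
    - intros t Ht; destruct (Hode t Ht) as [_ Hdd].
      assert (Hcomp : forall pr : V3 -> R, (forall k u, pr (vscale k u) = k * pr u) ->
        pr (vderiv A t) = - w * pr (Y t)).
      { intros pr Hpr; apply (Rmult_eq_reg_l (r * r)); [| nra].
        rewrite <- Hpr, Hdd, Hpr; unfold Y, w; rewrite Hpr; field; lra. }
      apply V3_ext; apply Hcomp; reflexivity.
    - lra. }
  exists (A m), (Y m); split; [apply Hunit, Hm | split; [| split]].
  - unfold Y; rewrite vdot_scale_l, vdot_scale_r, Hrad by exact Hm; field; lra.
  - unfold Y; rewrite vdot_scale_r, vdot_comm, (proj1 (Hode m Hm)); ring.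
  - intros t Ht; destruct (Hrot t Ht) as [HY HAt]; split; [exact HAt |].
    replace (D t) with (vscale r (Y t)) by (unfold Y; apply V3_ext; vec_unfold; field; lra).
    rewrite HY; unfold w; vec_ring.
Qed.

(** * Round suspensions *)

(* [(u, v) = l2 (2 rho, 0) + l3 (rho, h)] is a point of the triangle with vertices [(0, 0)],
   [(2 rho, 0)] and [(rho, h)]. *)
Lemma triangle_slope_bound (rho h eps l1 l2 l3 u v : R) :
  0 <= rho -> 0 <= eps -> h <= eps -> 0 <= l1 -> 0 <= l2 -> 0 <= l3 -> l1 + l2 + l3 = 1 ->
  u = 2 * l2 * rho + l3 * rho -> v = l3 * h -> rho * v <= eps * (2 * rho - u).
Proof.
  intros Hrho Heps Hh Hl1 Hl2 Hl3 Hsum -> ->.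
  replace (2 * rho - (2 * l2 * rho + l3 * rho)) with (2 * rho * l1 + rho * l3)
    by (replace l1 with (1 - l2 - l3) by lra; ring).
  assert (0 <= rho * l3 * (eps - h)) by (apply Rmult_le_pos; nra).
  assert (0 <= eps * (2 * rho * l1)) by (apply Rmult_le_pos; nra).
  nra.
Qed.

(* Apply the hypothesis at [s = 2 v - th]: both sides factor through [2 sin (th - v) > 0]. *)
Lemma chord_tangent_bound (rho eps th : R) : 0 < th < PI ->
  (forall s, - th <= s <= th -> rho * (cos s - cos th) <= eps * (sin th - sin s)) ->
  forall v, 0 < v < th -> rho * sin v <= eps * cos v.
Proof.
  intros Hth Hchord v Hv.
  set (u := th - v).
  assert (Hu : 0 < sin u) by (apply sin_gt_0; unfold u; lra).
  pose proof (Hchord (v - u) ltac:(unfold u; lra)) as H.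
  replace th with (v + u) in H by (unfold u; ring).
  rewrite cos_minus, cos_plus, sin_minus, sin_plus in H.
  apply (Rmult_le_reg_r (2 * sin u)); nra.
Qed.

Lemma slope_bound_abs (rho eps th : R) : 0 < rho -> 0 <= eps -> 0 < th < PI ->
  (forall v, 0 < v < th -> rho * sin v <= eps * cos v) ->
  th <= PI / 2 /\ forall s, Rabs s < th -> rho * Rabs (sin s) <= eps * cos s.
Proof.
  intros Hrho Heps Hth Hslope; split.
  - destruct (Rle_lt_dec th (PI / 2)) as [H | H]; [exact H | exfalso].
    pose proof (Hslope (PI / 2) ltac:(pose proof PI_RGT_0; lra)) as H2.
    rewrite sin_PI2, cos_PI2 in H2; lra.
  - intros s Hs; apply Rabs_def2 in Hs.
    destruct (Rtotal_order s 0) as [Hn | [-> | Hp]].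
    + rewrite Rabs_left by (apply sin_lt_0_var; lra).
      rewrite <- sin_neg, <- (cos_neg s); apply Hslope; lra.
    + rewrite sin_0, Rabs_R0, cos_0; lra.
    + rewrite Rabs_right by (left; apply sin_gt_0; lra); apply Hslope; lra.
Qed.

Section RoundArc.

Variables (a b r w : R) (beta : R -> V3) (e1 e2 : V3).
Hypotheses (Hab : a < b) (Hr : 0 < r) (Hw : 0 < w).
Hypotheses (H11 : vdot e1 e1 = 1) (H22 : vdot e2 e2 = 1) (H12 : vdot e1 e2 = 0).

Let m := (a + b) / 2.
Let th := w * (b - a) / 2.

Hypothesis Harc : forall t, a <= t <= b -> beta t =
  vadd (vscale (r * (sin (w * (t - m)) + sin th)) e1) (vscale (r * (cos (w * (t - m)) - cos th)) e2).

Lemma round_arc_angle_lt_PI :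
  (forall s t, a <= s <= b -> a <= t <= b -> beta s = beta t -> s = t) -> th < PI.
Proof.
  intro Hinj; destruct (Rlt_le_dec th PI) as [H | H]; [exact H | exfalso].
  pose proof PI_RGT_0.
  set (t2 := a + 2 * PI / w).
  assert (H2PI : 2 * PI / w <= b - a)
    by (apply (Rmult_le_reg_l w); [exact Hw |]; unfold th in H; field_simplify; lra).
  assert (Ht2 : a < t2 <= b)
    by (unfold t2; pose proof (Rdiv_lt_0_compat (2 * PI) w ltac:(lra) Hw); lra).
  assert (Ha : w * (a - m) = - th) by (unfold th, m; field).
  assert (Ht2m : w * (t2 - m) = - th + 2 * INR 1 * PI) by (unfold t2, th, m; simpl; field; lra).
  enough (beta t2 = beta a) by (pose proof (Hinj t2 a ltac:(lra) ltac:(lra) H1); lra).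
  rewrite !Harc by lra; rewrite Ht2m, Ha, cos_period, sin_period; reflexivity.
Qed.

Lemma round_arc_ends : beta a = mkV 0 0 0 /\ beta b = vscale (2 * (r * sin th)) e1.
Proof.
  split; rewrite Harc by lra.
  - replace (w * (a - m)) with (- th) by (unfold th, m; field).
    rewrite sin_neg, cos_neg; vec_ring.
  - replace (w * (b - m)) with th by (unfold th, m; field); vec_ring.
Qed.

Lemma round_arc_param s : - th <= s <= th -> a <= m + s / w <= b /\ w * (m + s / w - m) = s.
Proof.
  intro Hs; split; [| field; lra].
  assert (Hsw : - ((b - a) / 2) <= s / w <= (b - a) / 2).
  { split; [apply Rle_div_r | apply Rle_div_l]; unfold th in Hs; lra. }
  unfold m; lra.
Qed.

Lemma round_arc_chord_bound (P : V3) (eps : R) : 0 <= eps -> th < PI ->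
  isosceles_apex (beta a) (beta b) P eps ->
  (forall t, a <= t <= b -> in_triangle (beta a) (beta b) P (beta t)) ->
  forall s, - th <= s <= th -> r * sin th * (cos s - cos th) <= eps * (sin th - sin s).
Proof.
  intros Heps Hpi [Hperp Hheight] Htri s Hs.
  assert (Hth : 0 < th) by (unfold th; nra).
  set (rho := r * sin th).
  assert (Hrho : 0 < rho) by (apply Rmult_lt_0_compat; [exact Hr | apply sin_gt_0; lra]).
  destruct round_arc_ends as [Ha Hb]; fold rho in Hb.
  rewrite Ha, Hb in Hperp, Hheight, Htri.
  set (q := vsub P (vscale (1 / 2) (vadd (mkV 0 0 0) (vscale (2 * rho) e1)))) in *.
  assert (HP : P = vadd (vscale rho e1) (vscale 1 q)) by (unfold q; apply V3_ext; vec_unfold; field).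
  assert (Hq1 : vdot q e1 = 0).
  { replace (vsub (vscale (2 * rho) e1) (mkV 0 0 0)) with (vscale (2 * rho) e1) in Hperp by vec_ring.
    rewrite vdot_scale_r in Hperp; nra. }
  assert (Hq2 : vdot q e2 <= eps) by (rewrite <- Hheight; apply vdot_le_vnorm, H22).
  clearbody q.
  destruct (round_arc_param s Hs) as [Ht Hst].
  destruct (Htri _ Ht) as [l1 [l2 [l3 [Hl1 [Hl2 [Hl3 [Hsum Hpt]]]]]]].
  rewrite Harc, Hst in Hpt by exact Ht.
  assert (Hcoord : forall e, r * (sin s + sin th) * vdot e1 e + r * (cos s - cos th) * vdot e2 e
    = 2 * l2 * rho * vdot e1 e + l3 * (rho * vdot e1 e + vdot q e)).
  { intro e; rewrite <- vdot_comb, Hpt, HP; vec_unfold; ring. }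
  pose proof (Hcoord e1) as Hu; pose proof (Hcoord e2) as Hv.
  rewrite H11, (vdot_comm e2 e1), H12, Hq1 in Hu; rewrite H22, H12 in Hv.
  pose proof (triangle_slope_bound rho (vdot q e2) eps l1 l2 l3 (r * (sin s + sin th))
    (r * (cos s - cos th)) ltac:(lra) Heps Hq2 Hl1 Hl2 Hl3 Hsum ltac:(lra) ltac:(lra)).
  apply (Rmult_le_reg_l r); [exact Hr |].
  unfold rho in *; nra.
Qed.

End RoundArc.

(* [c / w * sin (w * (b - a) / 2)] is half the length of the chord. *)
Lemma round_suspension_normal_form (a b eps : R) (alpha : R -> V3) (f : R -> R) :
  a < b -> smooth3 alpha -> (forall t, a <= t <= b -> on_S2 (alpha t)) ->
  smooth f -> (forall t, a <= t <= b -> 0 < f t) ->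
  round_suspension (integral_curve f alpha a) a b eps ->
  exists (c w : R) (e1 e2 : V3), 0 < c /\ 0 < w /\
    vdot e1 e1 = 1 /\ vdot e2 e2 = 1 /\ vdot e1 e2 = 0 /\
    (forall t, a <= t <= b -> f t = c) /\
    (forall t, a <= t <= b -> alpha t = vpolar e1 e2 (w * (t - (a + b) / 2))) /\
    w * (b - a) / 2 <= PI / 2 /\
    forall s, Rabs s < w * (b - a) / 2 ->
      c / w * sin (w * (b - a) / 2) * Rabs (sin s) <= eps * cos s.
Proof.
  intros Hab Halpha Hunit Hf Hfpos
    [[Heps [_ [[_ [Hinj _]] [P [Hapex Htri]]]]] [[C [n [r [Hr [Hn Hcirc]]]]] [c Hspeed]]].
  set (beta := integral_curve f alpha a) in *.
  assert (Hfc : forall t, a <= t <= b -> f t = c).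
  { intros t Ht; rewrite <- (Hspeed t Ht); symmetry.
    apply vnorm_vderiv_integral_curve; auto; apply Rlt_le, Hfpos, Ht. }
  assert (Hc : 0 < c) by (rewrite <- (Hfc a) by lra; apply Hfpos; lra).
  destruct (circle_arc_rotation a b c r (fun t => vsub (beta t) C) alpha
    (fun t => vscale (f t) (alpha t)) n Hab Hc Hr Halpha) as [e1 [e2 [H11 [H22 [H12 Hrot]]]]].
  { intro t; apply has_vderiv_sub_const, has_vderiv_integral_curve; assumption. }
  { intros t Ht; rewrite Hfc by lra; reflexivity. }
  { intros t Ht; apply vnorm_eq; [lra | apply Hcirc; lra]. }
  { intros t Ht; apply Hcirc; lra. }
  { apply on_S2_vdot, Hn. }
  { intros t Ht; apply on_S2_vdot, Hunit; lra. }
  set (w := c / r) in *; set (m := (a + b) / 2) in *; set (th := w * (b - a) / 2).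
  assert (Hw : 0 < w) by (apply Rdiv_lt_0_compat; assumption).
  assert (Hth : 0 < th) by (unfold th; nra).
  assert (Harc : forall t, a <= t <= b -> beta t =
    vadd (vscale (r * (sin (w * (t - m)) + sin th)) e1) (vscale (r * (cos (w * (t - m)) - cos th)) e2)).
  { assert (HC : C = vscale (-1) (vscale r (vadd (vscale (sin (- th)) e1) (vscale (cos (- th)) e2)))).
    { destruct (Hrot a ltac:(lra)) as [_ HDa]; cbv beta in HDa.
      assert (Ha : beta a = mkV 0 0 0) by apply integral_curve_start; rewrite Ha in HDa.
      replace (w * (a - m)) with (- th) in HDa by (unfold th, m; field).
      rewrite <- HDa; vec_ring. }
    intros t Ht; destruct (Hrot t Ht) as [_ HDt]; cbv beta in HDt.
    replace (beta t) with (vadd (vsub (beta t) C) C) by vec_ring.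
    rewrite HDt, HC, sin_neg, cos_neg; vec_ring. }
  assert (Hpi : th < PI) by (apply (round_arc_angle_lt_PI a b r w beta e1 e2); assumption).
  assert (Hrs : 0 < r * sin th) by (apply Rmult_lt_0_compat; [exact Hr | apply sin_gt_0; lra]).
  destruct (slope_bound_abs (r * sin th) eps th Hrs (Rlt_le _ _ Heps) (conj Hth Hpi))
    as [Hhalf Hslope].
  { apply chord_tangent_bound; [lra |].
    apply (round_arc_chord_bound a b r w beta e1 e2 Hab Hr Hw H11 H22 H12 Harc P eps); auto; lra. }
  exists c, w, e1, e2; repeat split; try assumption.
  - intros t Ht; apply Hrot, Ht.
  - replace (c / w) with r by (unfold w; field; lra); exact Hslope.
Qed.

(** * Planar arcs with symmetric speed *)

Lemma isosceles_apex_planar (e1 e2 : V3) L h : 0 <= h -> vdot e2 e2 = 1 -> vdot e1 e2 = 0 ->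
  isosceles_apex (mkV 0 0 0) (vscale L e1) (vadd (vscale (L / 2) e1) (vscale h e2)) h.
Proof.
  intros Hh H22 H12; unfold isosceles_apex.
  replace (vsub (vadd (vscale (L / 2) e1) (vscale h e2)) (vscale (1 / 2) (vadd (mkV 0 0 0) (vscale L e1))))
    with (vscale h e2) by (apply V3_ext; vec_unfold; field).
  replace (vsub (vscale L e1) (mkV 0 0 0)) with (vscale L e1) by vec_ring.
  split; [rewrite vdot_scale_l, vdot_scale_r, vdot_comm, H12; ring | apply vnorm_scale_unit; assumption].
Qed.

Lemma in_triangle_planar (e1 e2 : V3) L h x y : 0 < L -> 0 < h -> 0 <= y ->
  0 <= 2 * h * x - L * y -> 0 <= 2 * h * (L - x) - L * y ->
  in_triangle (mkV 0 0 0) (vscale L e1) (vadd (vscale (L / 2) e1) (vscale h e2))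
    (vadd (vscale x e1) (vscale y e2)).
Proof.
  intros HL Hh Hy Hx1 Hx2.
  exists ((2 * h * (L - x) - L * y) / (2 * h * L)), ((2 * h * x - L * y) / (2 * h * L)), (y / h).
  repeat split; try (apply Rdiv_le_0_compat; nra).
  - field; lra.
  - apply V3_ext; vec_unfold; field; lra.
Qed.

Section PlanarArc.

Variables (a b w h : R) (g : R -> R) (alpha : R -> V3) (e1 e2 : V3).

Let m := (a + b) / 2.
Let th := w * (b - a) / 2.
Let X t : R := RInt (fun s => g s * cos (w * (s - m))) a t.
Let Y t : R := RInt (fun s => g s * - sin (w * (s - m))) a t.

Hypotheses (Hab : a < b) (Hw : 0 < w) (Hhalf : th <= PI / 2).
Hypothesis Hg : smooth g.
Hypothesis Hsym : forall t, a <= t <= b -> g (a + b - t) = g t.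
Hypothesis Hgpos : forall t, a <= t <= b -> 0 < g t.
Hypothesis Halpha : forall t, a <= t <= b -> alpha t = vpolar e1 e2 (w * (t - m)).
Hypothesis Halpha_smooth : smooth3 alpha.
Hypotheses (H11 : vdot e1 e1 = 1) (H22 : vdot e2 e2 = 1) (H12 : vdot e1 e2 = 0).
Hypothesis Hslope : forall s, Rabs s < th -> X b / 2 * Rabs (sin s) <= h * cos s.
Hypothesis Hh : 0 < h.

Let Hgc : continuity g := smooth_continuity g Hg.

Lemma planar_angle_bound x : a < x < b -> Rabs (w * (x - m)) < th.
Proof. intro Hx; apply Rabs_def1; unfold th, m; nra. Qed.

Lemma planar_cos_pos x : a < x < b -> 0 < cos (w * (x - m)).
Proof.
  intro Hx; pose proof (planar_angle_bound x Hx) as H; apply Rabs_def2 in H.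
  apply cos_gt_0; lra.
Qed.

Lemma planar_sin_sign x : a < x < b ->
  (x <= m -> sin (w * (x - m)) <= 0) /\ (m <= x -> 0 <= sin (w * (x - m))).
Proof.
  intro Hx; pose proof (planar_angle_bound x Hx) as H; apply Rabs_def2 in H.
  pose proof PI_RGT_0; split; intro Hxm.
  - rewrite <- (Ropp_involutive (w * (x - m))), sin_neg.
    enough (0 <= sin (- (w * (x - m)))) by lra. apply sin_ge_0; nra.
  - apply sin_ge_0; nra.
Qed.

Lemma planar_Y_end : Y b = 0.
Proof.
  apply RInt_reflect_odd; [lra | reg |].
  intros s Hs; rewrite Hsym by lra.
  replace (w * (a + b - s - m)) with (- (w * (s - m))) by (unfold m; field).
  rewrite sin_neg; ring.
Qed.

Lemma integral_curve_planar_end : integral_curve g alpha a b = vscale (X b) e1.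
Proof.
  rewrite (integral_curve_planar g alpha a b w m e1 e2 b Hgc Halpha) by lra.
  fold (X b) (Y b); rewrite planar_Y_end; vec_ring.
Qed.

Lemma planar_X_increasing s t : a <= s -> s < t -> t <= b -> X s < X t.
Proof.
  intros Hs Hst Ht; unfold X; rewrite <- (RInt_split _ a s t) by reg.
  enough (0 < RInt (fun x => g x * cos (w * (x - m))) s t) by lra.
  apply RInt_gt_0; [exact Hst | reg |].
  intros x Hx; apply Rmult_lt_0_compat; [apply Hgpos | apply planar_cos_pos]; lra.
Qed.

Lemma planar_X_end_pos : 0 < X b.
Proof.
  assert (Ha : X a = 0) by exact (RInt_point a _).
  pose proof (planar_X_increasing a b ltac:(lra) Hab ltac:(lra)); lra.
Qed.

Lemma planar_Y_ge_0 t : a <= t <= b -> 0 <= Y t.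
Proof.
  intros Ht; destruct (Rle_lt_dec t m) as [Htm | Htm].
  - apply RInt_ge_0; [lra | apply ex_RInt_continuity; reg |].
    intros x Hx; destruct (planar_sin_sign x ltac:(unfold m in *; lra)) as [Hneg _].
    specialize (Hgpos x ltac:(lra)); specialize (Hneg ltac:(lra)); nra.
  - pose proof planar_Y_end as Hend; unfold Y in Hend.
    rewrite <- (RInt_split _ a t b) in Hend by reg; fold (Y t) in Hend.
    enough (RInt (fun s => g s * - sin (w * (s - m))) t b <= 0 * (b - t)) by lra.
    apply RInt_le_const; [lra | reg |].
    intros x Hx; destruct (planar_sin_sign x ltac:(unfold m in *; lra)) as [_ Hpos].
    specialize (Hgpos x ltac:(lra)); specialize (Hpos ltac:(lra)); nra.
Qed.

Lemma planar_triangle_bounds t : a <= t <= b ->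
  0 <= 2 * h * X t - X b * Y t /\ 0 <= 2 * h * (X b - X t) - X b * Y t.
Proof.
  intros Ht; pose proof planar_X_end_pos as HL.
  assert (Hint : forall x, a < x < b ->
    0 <= g x * (2 * h * cos (w * (x - m)) + X b * sin (w * (x - m))) /\
    0 <= g x * (2 * h * cos (w * (x - m)) - X b * sin (w * (x - m)))).
  { intros x Hx; specialize (Hslope _ (planar_angle_bound x Hx)).
    pose proof (Rle_abs (sin (w * (x - m)))); pose proof (Rabs_maj2 (sin (w * (x - m)))).
    specialize (Hgpos x ltac:(lra)); split; apply Rmult_le_pos; nra. }
  assert (HXt : X b - X t = RInt (fun s => g s * cos (w * (s - m))) t b)
    by (unfold X; rewrite <- (RInt_split _ a t b) by reg; ring).
  assert (HYt : Y t = - RInt (fun s => g s * - sin (w * (s - m))) t b).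
  { pose proof planar_Y_end as Hend; unfold Y in *.
    rewrite <- (RInt_split _ a t b) in Hend by reg; lra. }
  split.
  - replace (2 * h * X t - X b * Y t)
      with (RInt (fun s => g s * (2 * h * cos (w * (s - m)) + X b * sin (w * (s - m)))) a t).
    + apply RInt_ge_0; [lra | apply ex_RInt_continuity; reg |].
      intros x Hx; apply Hint; lra.
    + rewrite (RInt_ext _ (fun s => (2 * h) * (g s * cos (w * (s - m)))
                                   + (- X b) * (g s * - sin (w * (s - m))))) by (intros; simpl; ring).
      rewrite RInt_lin_comb by reg; unfold X, Y; simpl; ring.
  - rewrite HXt, HYt.
    replace (2 * h * RInt (fun s => g s * cos (w * (s - m))) t b
             - X b * - RInt (fun s => g s * - sin (w * (s - m))) t b)
      with (RInt (fun s => g s * (2 * h * cos (w * (s - m)) - X b * sin (w * (s - m)))) t b).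
    + apply RInt_ge_0; [lra | apply ex_RInt_continuity; reg |].
      intros x Hx; apply Hint; lra.
    + rewrite (RInt_ext _ (fun s => (2 * h) * (g s * cos (w * (s - m)))
                                   + X b * (g s * - sin (w * (s - m))))) by (intros; simpl; ring).
      rewrite RInt_lin_comb by reg; simpl; ring.
Qed.

Lemma planar_suspension : suspension (integral_curve g alpha a) a b h.
Proof.
  set (gamma := integral_curve g alpha a).
  assert (Hrep : forall t, a <= t <= b -> gamma t = vadd (vscale (X t) e1) (vscale (Y t) e2))
    by (intros; apply (integral_curve_planar g alpha a b); assumption).
  assert (HX : forall t, a <= t <= b -> vdot (gamma t) e1 = X t).
  { intros t Ht; rewrite Hrep, vdot_comb, H11, vdot_comm, H12 by exact Ht; ring. }
  assert (HXa : X a = 0) by exact (RInt_point a _).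
  pose proof planar_X_end_pos as HL.
  assert (Hstart : gamma a = mkV 0 0 0) by apply integral_curve_start.
  split; [exact Hh | split; [| split]].
  - intro Heq; apply (f_equal (fun v => vdot v e1)) in Heq.
    rewrite HX, HX, HXa in Heq by lra; lra.
  - split; [apply smooth3_integral_curve; assumption | split].
    + intros s t Hs Ht Heq; apply (f_equal (fun v => vdot v e1)) in Heq.
      rewrite HX, HX in Heq by assumption.
      destruct (Rtotal_order s t) as [Hlt | [Heq' | Hgt]]; [| exact Heq' |];
        [pose proof (planar_X_increasing s t) | pose proof (planar_X_increasing t s)]; lra.
    + intros t Ht Hzero; unfold gamma in Hzero.
      rewrite (vderiv_unique _ _ _ (has_vderiv_integral_curve g alpha a t Hg Halpha_smooth)) in Hzero.
      apply (f_equal (fun v => vdot v v)) in Hzero.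
      rewrite vdot_scale_l, vdot_scale_r, Halpha, vpolar_unit, vdot_0_r in Hzero by assumption.
      specialize (Hgpos t Ht); nra.
  - exists (vadd (vscale (X b / 2) e1) (vscale h e2)).
    assert (Hend : gamma b = vscale (X b) e1) by exact integral_curve_planar_end.
    rewrite Hstart, Hend.
    split; [apply isosceles_apex_planar; auto; lra |].
    intros t Ht; rewrite Hrep by exact Ht.
    destruct (planar_triangle_bounds t Ht).
    apply in_triangle_planar; auto; apply planar_Y_ge_0, Ht.
Qed.

End PlanarArc.

Theorem lemma6 (a b eps : R) (alpha : R -> V3) (f : R -> R) :
  a < b ->
  smooth3 alpha ->
  (forall t, a <= t <= b -> on_S2 (alpha t)) ->
  smooth f ->
  (forall t, a <= t <= b -> 0 < f t) ->
  round_suspension (integral_curve f alpha a) a b eps ->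
  forall k : R, 1/2 <= k <= 3/2 ->
  exists g : R -> R,
    smooth g /\
    (forall t, a <= t <= b -> 0 < g t) /\
    (exists delta : R, 0 < delta /\
       forall t, a <= t <= b -> (t < a + delta \/ b - delta < t) -> g t = f t) /\
    suspension (integral_curve g alpha a) a b (k * eps) /\
    vsub (integral_curve g alpha a b) (integral_curve g alpha a a)
      = vscale k (vsub (integral_curve f alpha a b) (integral_curve f alpha a a)).
Proof.
  intros Hab Halpha Hunit Hf Hfpos Hround k Hk.
  assert (Heps : 0 < eps) by apply Hround.
  destruct (round_suspension_normal_form a b eps alpha f Hab Halpha Hunit Hf Hfpos Hround)
    as [c [w [e1 [e2 [Hc [Hw [H11 [H22 [H12 [Hfc [Hrot [Hhalf Hslope]]]]]]]]]]]].
  set (W := fun s => cos (w * (s - (a + b) / 2))).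
  destruct (exists_speed_profile W a b c k Hab Hc ltac:(lra) ltac:(unfold W; reg))
    as [g [delta [Hg [Hgpos [Hdelta [Hends [Hsym HgW]]]]]]].
  { intros t Ht; split; [apply (planar_cos_pos a b w); assumption | apply COS_bound]. }
  assert (HW : c * RInt W a b = 2 * (c / w * sin (w * (b - a) / 2)))
    by (unfold W; rewrite RInt_cos_centered by lra; field; lra).
  assert (Hfb : integral_curve f alpha a b = integral_curve (fun _ => c) alpha a b)
    by (apply integral_curve_ext; [lra | intros; apply Hfc; lra]).
  exists g; split; [exact Hg | split; [intros; apply Hgpos | split; [| split]]].
  - exists delta; split; [exact Hdelta |]; intros t Ht Hnear.
    rewrite Hends, Hfc by assumption; reflexivity.
  - apply (planar_suspension a b w (k * eps) g alpha e1 e2); auto; [| nra].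
    intros s Hs; change (RInt (fun x => g x * cos (w * (x - (a + b) / 2))) a b)
      with (RInt (fun x => g x * W x) a b).
    rewrite HgW, Rmult_assoc, HW.
    specialize (Hslope s Hs); nra.
  - rewrite Hfb, !integral_curve_start.
    rewrite (integral_curve_planar_end a b w g alpha e1 e2),
      (integral_curve_planar_end a b w (fun _ => c) alpha e1 e2); auto using smooth_const.
    change (RInt (fun s => g s * cos (w * (s - (a + b) / 2))) a b) with (RInt (fun s => g s * W s) a b).
    change (RInt (fun s => c * cos (w * (s - (a + b) / 2))) a b) with (RInt (fun s => c * W s) a b).
    rewrite HgW, RInt_scal_l by (unfold W; reg); vec_ring.
Qed.
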